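(* Let $s$ be an aperiodic standard episturmian word over a finite alphabet $A$, and let $s=U_1U_2\cdots U_n\cdots$ be a factorization of $s$ where each $U_i$ ($i\ge1$) is a non-empty prefix of $s$. Then there exist indices $i\neq j$ such that $U_i$ and $U_j$ end in different letters.
   Context: An infinite word $s$ over a finite alphabet $A$ is standard episturmian if its set of factors is closed under reversal (if $u$ is a factor so is its reversal) and every left special factor of $s$ is a prefix of $s$; here a factor $u$ is left special if there are distinct letters $x,y\in A$ with $xu$ and $yu$ both factors of $s$. Aperiodic means not ultimately periodic. *)

From mathcomp Require Import all_boot.
Set Implicit Arguments. Unset Strict Implicit. Unset Printing Implicit Defensive.

Definition subword (A : Type) (s : nat -> A) (i n : nat) : seq A :=
  mkseq (fun k => s (i + k)) n.

Definition factor (A : Type) (s : nat -> A) (u : seq A) : Prop :=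
  exists i, u = subword s i (size u).

Definition is_prefix (A : Type) (s : nat -> A) (u : seq A) : Prop :=
  u = subword s 0 (size u).

Definition closed_under_reversal (A : Type) (s : nat -> A) : Prop :=
  forall u, factor s u -> factor s (rev u).

Definition left_special (A : Type) (s : nat -> A) (u : seq A) : Prop :=
  exists x y : A, x <> y /\ factor s (x :: u) /\ factor s (y :: u).

Definition standard_episturmian (A : Type) (s : nat -> A) : Prop :=
  closed_under_reversal s /\ (forall u, left_special s u -> is_prefix s u).

Definition ultimately_periodic (A : Type) (s : nat -> A) : Prop :=
  exists p n0, 0 < p /\ forall n, n0 <= n -> s (n + p) = s n.

Definition aperiodic (A : Type) (s : nat -> A) : Prop := ~ ultimately_periodic s.

Definition start_pos (A : Type) (U : nat -> seq A) (n : nat) : nat :=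
  \sum_(i < n) size (U i).

(* s = U_0 U_1 U_2 ... (infinite concatenation; all U_i are assumed nonempty
   separately, so the blocks cover every position). *)
Definition is_factorization (A : Type) (s : nat -> A) (U : nat -> seq A) : Prop :=
  forall n j (x0 : A), j < size (U n) -> s (start_pos U n + j) = nth x0 (U n) j.

From mathcomp Require Import all_boot zify.
From Stdlib Require Import Classical.

Set Implicit Arguments. Unset Strict Implicit. Unset Printing Implicit Defensive.

(* Suppose, for a contradiction, that every block U_i ends in
   the same letter a, and write B_i for the position where U_i starts, so that
   s(B_i - 1) = a for i > 0 and s agrees on [B_i, B_(i+1)) with its prefix.
   1. Properties of words closed under reversal whose left special factors are
      prefixes: every prefix recurs at a positive position, and if the prefix of
      length l occurs at r > 0 and the occurrence cannot be extended by one
      letter, then that prefix is a palindrome (its reversal is left special).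
   2. Reflection: if the palindromic prefix of length l occurs at r and its end
      r + l lies in a block starting strictly after r, reading the block back
      through the palindrome lands on s(B_i - 1) = a.  Applied at r and at 0 this
      shows that a maximal occurrence of the prefix at r > 0 whose end falls in
      a block starting after r has length l < m = |U_0|.
   3. Every maximal occurrence at r > 0 has length < m: otherwise compare with
      the maximal occurrence at the start of the block containing r + l.
   4. But some occurrence of the prefix of length m at r > 0 exists (step 1) and
      is maximal with some length >= m, since s is aperiodic. *)

Section Words.
Variables (A : Type) (s : nat -> A).

Lemma size_subword i n : size (subword s i n) = n.
Proof. by rewrite /subword size_mkseq. Qed.

Lemma nth_subword x0 i n k : k < n -> nth x0 (subword s i n) k = s (i + k).
Proof. by move=> lt_kn; rewrite /subword nth_mkseq. Qed.

Lemma subwordS i n : subword s i n.+1 = rcons (subword s i n) (s (i + n)).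
Proof. exact: mkseqS. Qed.

Definition prefix_occurs (r l : nat) : Prop := forall k, k < l -> s (r + k) = s k.

Definition palindromic_prefix (l : nat) : Prop :=
  forall k, k < l -> s k = s (l - k.+1).

Lemma prefix_occurs_subword r l : prefix_occurs r l -> subword s r l = subword s 0 l.
Proof.
move=> occ; apply: (@eq_from_nth _ (s 0)); rewrite !size_subword // => k lt_kl.
by rewrite !nth_subword // add0n occ.
Qed.

Lemma mirror_occurrence n : closed_under_reversal s ->
  exists i, forall k, k < n -> s (i + k) = s (n - k.+1).
Proof.
move=> rev_closed.
have [i def_i] : factor s (rev (subword s 0 n)).
  by apply: rev_closed; exists 0; rewrite size_subword.
exists i => k lt_kn; have := congr1 (nth (s 0) ^~ k) def_i.
by rewrite size_rev size_subword nth_rev ?size_subword // !nth_subword //; lia.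
Qed.

(* In a word closed under reversal every prefix recurs at a positive position:
   mirror the prefix, then mirror a prefix long enough to contain the mirror. *)
Lemma prefix_recurs m : closed_under_reversal s ->
  exists r, 0 < r /\ prefix_occurs r m.
Proof.
move=> rev_closed; have [i mir_i] := mirror_occurrence m rev_closed.
have [j mir_j] := mirror_occurrence (i + m).+1 rev_closed.
exists j.+1; split=> // k lt_km.
rewrite addSnnS mir_j; last by lia.
have -> : (i + m).+1 - k.+2 = i + (m - k.+1) by lia.
by rewrite mir_i; [congr (s _) | ]; lia.
Qed.

(* A maximal occurrence at r of the prefix of length l forces that prefix to be
   a palindrome: its reversal is left special, hence a prefix. *)
Lemma maximal_occurrence_palindromic r l : standard_episturmian s ->
  s (r + l) <> s l -> prefix_occurs r l -> palindromic_prefix l.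
Proof.
move=> [rev_closed special_prefix] mismatch occ.
set u := rev (subword s 0 l).
have rev_factor i : factor s (rev (subword s i l.+1)).
  by apply: rev_closed; exists i; rewrite size_subword.
have u_special : left_special s u.
  exists (s l), (s (r + l)); split; first by move=> e; apply: mismatch.
  have := rev_factor r; rewrite subwordS prefix_occurs_subword // rev_rcons.
  by have := rev_factor 0; rewrite subwordS rev_rcons add0n.
have := special_prefix u u_special; rewrite /is_prefix size_rev size_subword => u_pre.
move=> k lt_kl; have := congr1 (nth (s 0) ^~ k) u_pre.
rewrite nth_rev ?size_subword // !nth_subword ?add0n //; lia.
Qed.

End Words.

Lemma first_mismatch (A : eqType) (s : nat -> A) r : aperiodic s -> 0 < r ->
  exists l, s (r + l) <> s l /\ prefix_occurs s r l.
Proof.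
move=> aper r_gt0.
have ex_mismatch : exists l, s (r + l) != s l.
  apply: NNPP => no_mismatch; apply: aper; exists r, 0; split=> // n _.
  rewrite addnC; case: (eqVneq (s (r + n)) (s n)) => // mismatch.
  by case: no_mismatch; exists n.
case: (ex_minnP ex_mismatch) => l /eqP mismatch min_l; exists l; split=> // k lt_kl.
by apply/eqP; apply: contraTT lt_kl => /min_l; rewrite -leqNgt.
Qed.

Section CommonLastLetter.
Variables (A : eqType) (s : nat -> A) (U : nat -> seq A) (a : A).
Hypothesis U_prefix : forall i, is_prefix s (U i).
Hypothesis U_factorization : is_factorization s U.
Hypothesis U_ends_in_a : forall i, exists u, U i = rcons u a.

Local Notation B := (start_pos U).
Local Notation m := (size (U 0)).

Lemma start_pos0 : B 0 = 0.
Proof. by rewrite /start_pos big_ord0. Qed.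

Lemma start_posS i : B i.+1 = B i + size (U i).
Proof. by rewrite /start_pos big_ord_recr. Qed.

Lemma size_block_gt0 i : 0 < size (U i).
Proof. by have [u ->] := U_ends_in_a i; rewrite size_rcons. Qed.

Lemma start_pos1 : B 1 = m.
Proof. by rewrite start_posS start_pos0. Qed.

Lemma start_pos_mono : {mono B : i j / i <= j}.
Proof.
apply: leq_mono; apply: homo_ltn => [y x z|i]; first exact: ltn_trans.
by rewrite start_posS -addn1 leq_add2l size_block_gt0.
Qed.

Lemma start_pos_ltn : {mono B : i j / i < j}.
Proof. exact: leqW_mono start_pos_mono. Qed.

Lemma block_of n : exists i, B i <= n < B i.+1.
Proof.
have B_ge i : i <= B i.
  elim: i => [|i IH]; first by [].
  by rewrite start_posS; have := size_block_gt0 i; lia.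
have ex_after : exists k, n < B k by exists n.+1; apply: B_ge.
case: (ex_minnP ex_after) => -[|k]; first by rewrite start_pos0.
move=> lt_nk min_k; exists k; rewrite lt_nk andbT leqNgt.
by apply/negP => /min_k; lia.
Qed.

Lemma in_block i n : B i <= n < B i.+1 -> s n = s (n - B i).
Proof.
rewrite start_posS => /andP [le_Bn lt_nB].
rewrite -[in LHS](subnKC le_Bn) (U_factorization (s 0)); last by lia.
rewrite (U_prefix i) nth_subword //; lia.
Qed.

Lemma before_block i : 0 < i -> s (B i).-1 = a.
Proof.
case: i => // i _; have [u def_Ui] := U_ends_in_a i.
have lt_size : (size (U i)).-1 < size (U i) by rewrite prednK ?size_block_gt0.
have -> : (B i.+1).-1 = B i + (size (U i)).-1.
  by rewrite start_posS; have := size_block_gt0 i; lia.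
by rewrite (U_factorization a lt_size) def_Ui size_rcons nth_rcons ltnn eqxx.
Qed.

(* Reflection: if the palindromic prefix of length l occurs at r and ends inside
   a block that starts after r, reading the block back through the palindrome
   gives the letter just before that block, i.e. a. *)
Lemma reflect_to_block_end r l i : palindromic_prefix s l -> prefix_occurs s r l ->
  r < B i <= r + l -> r + l < B i.+1 -> s (r + l) = a.
Proof.
move=> pal occ /andP [lt_rB le_Bl] lt_lB.
have i_gt0 : 0 < i by case: i lt_rB le_Bl lt_lB => //; rewrite start_pos0.
rewrite (@in_block i) ?le_Bl // pal; last by lia.
have -> : l - (r + l - B i).+1 = B i - r.+1 by lia.
rewrite -(occ (B i - r.+1)); last by lia.
by rewrite -(before_block i_gt0); congr (s _); lia.
Qed.

Hypothesis episturmian : standard_episturmian s.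

(* A maximal occurrence of a prefix at r > 0 that ends in a block starting
   after r is shorter than U_0: otherwise its end and the end of the prefix
   itself (which lies beyond B_1 = m) would both reflect to a. *)
Lemma mismatch_before_block r l i : s (r + l) <> s l -> prefix_occurs s r l ->
  r < B i <= r + l -> r + l < B i.+1 -> l < m.
Proof.
move=> mismatch occ r_block end_block; rewrite ltnNge; apply/negP => le_ml.
have pal := maximal_occurrence_palindromic episturmian mismatch occ.
have [j /andP [le_Bl lt_lB]] := block_of l.
have j_gt0 : 0 < B j.
  rewrite -start_pos0 start_pos_ltn lt0n; apply: contraTneq lt_lB => ->.
  by rewrite start_pos1 -leqNgt.
apply: mismatch; rewrite (reflect_to_block_end pal occ r_block end_block).
by rewrite -[l]add0n (@reflect_to_block_end 0 l j pal) // add0n ?j_gt0.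
Qed.

Hypothesis aper : aperiodic s.

(* If the block containing its end starts after r, this is the previous
   lemma; otherwise that block starts at some B_i <= r, and the maximal
   occurrence at B_i is longer still, yet it ends in a later block. *)
Lemma mismatch_short r l : 0 < r -> s (r + l) <> s l -> prefix_occurs s r l -> l < m.
Proof.
move=> r_gt0 mismatch occ; have [i /andP [le_Bi lt_iB]] := block_of (r + l).
case: (ltnP r (B i)) => [lt_rB | le_Br].
  by apply: (@mismatch_before_block r l i) => //; rewrite lt_rB.
case: i le_Bi lt_iB le_Br => [|i] le_Bi lt_iB le_Br.
  by move: lt_iB; rewrite start_pos1; lia.
have Bi_gt0 : 0 < B i.+1 by rewrite -start_pos0 start_pos_ltn.
have [l' [mismatch' occ']] := first_mismatch aper Bi_gt0.
have block_end_le : B i.+2 <= B i.+1 + l'.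
  rewrite leqNgt; apply/negP => lt_B; apply: mismatch'.
  by rewrite (@in_block i.+1) ?leq_addr // addKn.
have [j /andP [le_Bj lt_jB]] := block_of (B i.+1 + l').
have lt_Bj : B i.+1 < B j.
  rewrite start_pos_ltn ltnNge; apply/negP => le_ji.
  by move: lt_jB; rewrite ltnNge (leq_trans _ block_end_le) // start_pos_mono.
have := @mismatch_before_block _ _ j mismatch' occ'; rewrite lt_Bj le_Bj.
by move=> /(_ isT lt_jB); lia.
Qed.

(* Contradiction: the prefix U_0 recurs at some r > 0, and the maximal
   occurrence there is at least as long as U_0. *)
Lemma no_common_last_letter : False.
Proof.
have [r [r_gt0 occ_m]] := prefix_recurs m (proj1 episturmian).
have [l [mismatch occ_l]] := first_mismatch aper r_gt0.
have := mismatch_short r_gt0 mismatch occ_l; rewrite ltnNge => /negP; apply.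
by rewrite leqNgt; apply/negP => /occ_m.
Qed.

End CommonLastLetter.

Theorem mainTheorem9 (A : finType) (s : nat -> A) (U : nat -> seq A) :
  standard_episturmian s -> aperiodic s ->
  (forall i, U i <> [::]) ->
  (forall i, is_prefix s (U i)) ->
  is_factorization s U ->
  exists i j (u v : seq A) (a b : A),
    i <> j /\ U i = rcons u a /\ U j = rcons v b /\ a <> b.
Proof.
move=> episturmian aper U_nonempty U_prefix U_factorization.
apply: NNPP => same_last.
have last_letter j : exists u c, U j = rcons u c.
  by case: (lastP (U j)) (U_nonempty j) => // u c _; exists u, c.
have [u0 [a U0_a]] := last_letter 0.
apply: (no_common_last_letter U_prefix U_factorization (a := a)) => // i.
have [u [b Ui_b]] := last_letter i; exists u.
case: (eqVneq b a) => [<- // | b_neq_a]; case: same_last.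
exists i, 0, u, u0, b, a; repeat split => //; last exact/eqP.
move=> i0; move: Ui_b; rewrite i0 U0_a => /rcons_inj [_ a_b].
by rewrite a_b eqxx in b_neq_a.
Qed.
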